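(* Fix $n\ge 2$, a dictator agent $t\in\{1,\dots,n\}$, and parameters $k\in[2,+\infty)$ and $a\in(0,1)$. Let $f$ be the mechanism that, on a profile $\mathbf{x}=(x_1,\dots,x_n)$ with $x_l=\min\mathbf{x}$, $x_r=\max\mathbf{x}$, $L=x_r-x_l$, outputs $l_1=x_t$ and $$l_2=\begin{cases} x_t+\max\left\{\frac{(1-a)k}{a}(x_t-x_l),\; x_r-x_t\right\} & \text{if } x_t\in[x_l,\,x_l+aL),\\[2pt] x_t-\max\left\{x_t-x_l,\; \frac{ak}{1-a}(x_r-x_t)\right\} & \text{if } x_t\in[x_l+aL,\,x_r].\end{cases}$$ Then for every profile $\mathbf{x}\in\mathbb{R}^n$, $SC(f,\mathbf{x})\le \max\left\{\frac{(1-a)k}{2a},\frac{ak}{2(1-a)}\right\}(n-1)\,OPT(\mathbf{x})$.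
   Context: Two-facility game on a line: agent $i$ has location $x_i\in\mathbb{R}$. For facility locations $\{l_1,l_2\}$, an agent at $y$ has cost $\min\{|l_1-y|,|l_2-y|\}$. $SC(f,\mathbf{x})$ is the sum over all agents of their costs under $f(\mathbf{x})$, and $OPT(\mathbf{x})=\min_{l_1,l_2\in\mathbb{R}}\sum_i\min\{|l_1-x_i|,|l_2-x_i|\}$. *)

From HB Require Import structures.
From mathcomp Require Import all_boot all_order all_algebra.
From mathcomp Require Import all_classical all_reals.
Set Implicit Arguments. Unset Strict Implicit. Unset Printing Implicit Defensive.
Import Order.TTheory GRing.Theory Num.Theory.
Local Open Scope ring_scope.
Local Open Scope classical_set_scope.

Section Defs.
Variable R : realType.

Definition agent_cost (l1 l2 y : R) : R := Num.min `|l1 - y| `|l2 - y|.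

Definition SC_loc (n : nat) (l1 l2 : R) (x : 'I_n -> R) : R :=
  \sum_(i < n) agent_cost l1 l2 (x i).

Definition OPT (n : nat) (x : 'I_n -> R) : R :=
  inf (range (fun p : R * R => SC_loc p.1 p.2 x)).

Definition xmin (n : nat) (t : 'I_n) (x : 'I_n -> R) : R :=
  \big[Num.min/x t]_(i < n) x i.
Definition xmax (n : nat) (t : 'I_n) (x : 'I_n -> R) : R :=
  \big[Num.max/x t]_(i < n) x i.

Definition mech (n : nat) (t : 'I_n) (k a : R) (x : 'I_n -> R) : R * R :=
  let xl := xmin t x in
  let xr := xmax t x in
  let L := xr - xl in
  let xt := x t in
  (xt,
   if xt < xl + a * L then
     xt + Num.max ((1 - a) * k / a * (xt - xl)) (xr - xt)
   else
     xt - Num.max (xt - xl) (a * k / (1 - a) * (xr - xt))).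

Definition SC_mech (n : nat) (t : 'I_n) (k a : R) (x : 'I_n -> R) : R :=
  SC_loc (mech t k a x).1 (mech t k a x).2 x.

End Defs.

From HB Require Import structures.
From mathcomp Require Import all_boot all_order all_algebra.
From mathcomp Require Import all_classical all_reals.
From mathcomp Require Import ring lra.
Set Implicit Arguments.
Unset Strict Implicit.
Unset Printing Implicit Defensive.
Import Order.TTheory GRing.Theory Num.Theory.
Local Open Scope ring_scope.

(* Agent t pays nothing, so it suffices to bound the cost of every other agent
   by C * SC(l1, l2) for an arbitrary placement (l1, l2).  Of any three agents
   two share their nearest facility in (l1, l2), so the smaller of the two gaps
   between three agents on the line is at most SC(l1, l2).  Applied to triples
   among x_l, x_t, x_i, x_r this bounds the cost of agent i: the threshold a L
   gives x_t - x_l <= a/(1-a) (x_r - x_t), and when l2 lies beyond x_r agent i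
   pays at most half of l2 - x_t.  The case x_t >= x_l + a L is the mirror
   image under x |-> -x, a |-> 1 - a. *)

Section DictatorMechanism.
Variable R : realType.

Lemma agent_cost_ge0 (l1 l2 y : R) : 0 <= agent_cost l1 l2 y.
Proof. by rewrite /agent_cost le_min !normr_ge0. Qed.

Lemma agent_cost1 (l2 y : R) : agent_cost y l2 y = 0.
Proof. by rewrite /agent_cost subrr normr0 min_l. Qed.

Lemma agent_cost_le1 (l1 l2 y w : R) :
  l1 - y <= w -> y - l1 <= w -> agent_cost l1 l2 y <= w.
Proof. by move=> h1 h2; rewrite /agent_cost ge_min ler_norml; lra. Qed.

Lemma agent_cost_le2 (l1 l2 y w : R) :
  l2 - y <= w -> y - l2 <= w -> agent_cost l1 l2 y <= w.
Proof.
by move=> h1 h2; rewrite /agent_cost ge_min ![`|l2 - y| <= w]ler_norml; lra.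
Qed.

Lemma agent_costN (l1 l2 y : R) :
  agent_cost (- l1) (- l2) (- y) = agent_cost l1 l2 y.
Proof. by rewrite /agent_cost -!opprD !normrN. Qed.

Lemma SC_loc_ge0 (n : nat) (l1 l2 : R) (x : 'I_n -> R) : 0 <= SC_loc l1 l2 x.
Proof. by apply: sumr_ge0 => i _; apply: agent_cost_ge0. Qed.

Lemma SC_locN (n : nat) (l1 l2 : R) (x : 'I_n -> R) :
  SC_loc (- l1) (- l2) (fun i => - x i) = SC_loc l1 l2 x.
Proof. by apply: eq_bigr => i _; rewrite agent_costN. Qed.

Lemma min_gap_le_agent_cost3 (l1 l2 p q r : R) : p <= q -> q <= r ->
  Num.min (q - p) (r - q)
    <= agent_cost l1 l2 p + agent_cost l1 l2 q + agent_cost l1 l2 r.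
Proof.
move=> pq qr; rewrite ge_min.
have norm_ge (z : R) : z <= `|z| /\ - z <= `|z|.
  by split; [|rewrite -normrN]; apply: ler_norm.
have nearest y :
    agent_cost l1 l2 y = `|l1 - y| \/ agent_cost l1 l2 y = `|l2 - y|.
  by rewrite /agent_cost /Order.min; case: ifP; [left|right].
have [? ?] := norm_ge (l1 - p); have [? ?] := norm_ge (l2 - p).
have [? ?] := norm_ge (l1 - q); have [? ?] := norm_ge (l2 - q).
have [? ?] := norm_ge (l1 - r); have [? ?] := norm_ge (l2 - r).
by case: (nearest p) => ->; case: (nearest q) => ->; case: (nearest r) => ->;
  apply/orP; (left; lra) || (right; lra).
Qed.

Lemma min_gap_le_SC_loc (n : nat) (l1 l2 : R) (x : 'I_n -> R) (j k m : 'I_n) :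
  x j <= x k -> x k <= x m -> Num.min (x k - x j) (x m - x k) <= SC_loc l1 l2 x.
Proof.
move=> jk km; have S0 := SC_loc_ge0 l1 l2 x.
have [-> | njk] := eqVneq j k; first by rewrite subrr ge_min S0.
have [-> | nkm] := eqVneq k m; first by rewrite subrr ge_min S0 orbT.
have [ejm | njm] := eqVneq j m.
  by rewrite ge_min; apply/orP; right; rewrite ejm in jk; lra.
apply: le_trans (min_gap_le_agent_cost3 l1 l2 jk km) _.
rewrite /SC_loc (bigD1 j) // (bigD1 k) 1?eq_sym //= (bigD1 m) /=; last first.
  by rewrite [m == j]eq_sym njm [m == k]eq_sym nkm.
by rewrite !addrA lerDl sumr_ge0 // => i _; apply: agent_cost_ge0.
Qed.

Lemma xminE (n : nat) (t : 'I_n) (x : 'I_n -> R) :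
  xmin t x = x [arg min_(i < t) x i]%O.
Proof.
case: arg_minP => // il _ hil; apply/eqP; rewrite eq_le bigmin_le.
by apply/bigmin_geP; split => [|i _]; apply: hil.
Qed.

Lemma xmaxE (n : nat) (t : 'I_n) (x : 'I_n -> R) :
  xmax t x = x [arg max_(i > t) x i]%O.
Proof.
case: arg_maxP => // ir _ hir; apply/eqP; rewrite eq_le le_bigmax andbT.
by apply/bigmax_leP; split => [|i _]; apply: hir.
Qed.

Definition approx_ratio (k a : R) : R :=
  Num.max ((1 - a) * k / (2 * a)) (a * k / (2 * (1 - a))).

Lemma approx_ratio1B (k a : R) : approx_ratio k (1 - a) = approx_ratio k a.
Proof. by rewrite /approx_ratio subKr maxC. Qed.

Lemma approx_ratio_ge1 (k a : R) : 2 <= k -> 0 < a -> a < 1 ->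
  1 <= approx_ratio k a.
Proof.
move=> hk ha0 ha1; rewrite le_max; apply/orP.
case: (lerP (2 * a) 1) => h; [left|right]; rewrite ler_pdivlMr ?mul1r; try lra.
  have : 0 <= (1 - a) * (k - 2) by apply: mulr_ge0; lra.
  lra.
have : 0 <= a * (k - 2) by apply: mulr_ge0; lra.
lra.
Qed.

Lemma le_approx_ratio_slope (k a : R) : 0 < a -> a < 1 ->
  (1 - a) * k / a <= 2 * approx_ratio k a.
Proof.
move=> ha0 ha1.
rewrite (_ : (1 - a) * k / a = 2 * ((1 - a) * k / (2 * a))); last by field; lra.
by rewrite ler_pM2l // le_max lexx.
Qed.

Lemma le_approx_ratio_odds (k a u v : R) : 2 <= k -> 0 < a -> a < 1 ->
  0 <= v -> (1 - a) * u <= a * v -> u <= approx_ratio k a * v.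
Proof.
move=> hk ha0 ha1 v0 uv; apply: (@le_trans _ _ (a / (1 - a) * v)).
  by rewrite mulrAC ler_pdivlMr ?subr_gt0 // mulrC.
apply: (ler_wpM2r v0); rewrite le_max; apply/orP; right.
rewrite (_ : a * k / (2 * (1 - a)) = a / (1 - a) * (k / 2)); last by field; lra.
rewrite ler_peMr //; first by apply: divr_ge0; lra.
by rewrite ler_pdivlMr // mul1r.
Qed.

Lemma agent_cost_left_rule (n : nat) (x : 'I_n -> R) (il ir t i : 'I_n)
    (k b l1 l2 : R) :
  (forall j, x il <= x j) -> (forall j, x j <= x ir) ->
  2 <= k -> 0 < b -> b < 1 -> (1 - b) * (x t - x il) <= b * (x ir - x t) ->
  agent_cost (x t)
      (x t + Num.max ((1 - b) * k / b * (x t - x il)) (x ir - x t)) (x i)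
    <= approx_ratio k b * SC_loc l1 l2 x.
Proof.
move=> hil hir hk hb0 hb1 ht.
set C := approx_ratio k b; set S := SC_loc l1 l2 x; set m := Num.max _ _.
move: (hil t) (hir t) (hil i) (hir i) => l_t t_r l_i i_r.
have C1 : 1 <= C by apply: approx_ratio_ge1.
have S0 : 0 <= S by apply: SC_loc_ge0.
have S_CS : S <= C * S by rewrite ler_peMl.
have CS_mono u : u <= S -> C * u <= C * S by apply: ler_wpM2l; lra.
have tl_odds : x t - x il <= C * (x ir - x t).
  by apply: le_approx_ratio_odds => //; lra.
have slope_le : (1 - b) * k / b * (x t - x il) <= 2 * C * (x t - x il).
  by apply: ler_wpM2r; [lra | apply: le_approx_ratio_slope].
have [it | ti] := leP (x i) (x t).
  have cost_le : agent_cost (x t) (x t + m) (x i) <= x t - x i.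
    by apply: agent_cost_le1; lra.
  have := min_gap_le_SC_loc l1 l2 it t_r.
  rewrite -/S ge_min => /orP[ti_le | rt_le].
    by apply: le_trans cost_le _; lra.
  by have := CS_mono _ rt_le; lra.
have cost_le : agent_cost (x t) (x t + m) (x i) <= x i - x t.
  by apply: agent_cost_le1; lra.
have := min_gap_le_SC_loc l1 l2 (ltW ti) i_r.
rewrite -/S ge_min => /orP[it_le | ri_le].
  by apply: le_trans cost_le _; lra.
have [slope_r | r_slope] := leP ((1 - b) * k / b * (x t - x il)) (x ir - x t).
  by rewrite /m max_r //; apply: agent_cost_le2; lra.
have m_slope : m = (1 - b) * k / b * (x t - x il) by rewrite /m max_l // ltW.
have := min_gap_le_SC_loc l1 l2 l_t (ltW ti).
rewrite -/S ge_min => /orP[tl_le | it_le].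
  have cost_le2 : agent_cost (x t) (x t + m) (x i) <= x t + m - x i.
    by apply: agent_cost_le2; lra.
  (* the cost is at most x_i - x_t and l2 - x_i, hence at most (l2 - x_t) / 2 *)
  by have := CS_mono _ tl_le; lra.
by apply: le_trans cost_le _; lra.
Qed.

Lemma agent_cost_right_rule (n : nat) (x : 'I_n -> R) (il ir t i : 'I_n)
    (k b l1 l2 : R) :
  (forall j, x il <= x j) -> (forall j, x j <= x ir) ->
  2 <= k -> 0 < b -> b < 1 -> b * (x ir - x t) <= (1 - b) * (x t - x il) ->
  agent_cost (x t)
      (x t - Num.max (x t - x il) (b * k / (1 - b) * (x ir - x t))) (x i)
    <= approx_ratio k b * SC_loc l1 l2 x.
Proof.
move=> hil hir hk hb0 hb1 ht.
rewrite -agent_costN -SC_locN -approx_ratio1B opprB addrC maxC.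
rewrite [x ir - _]addrC [x t - _]addrC.
have := @agent_cost_left_rule n (fun j => - x j) ir il t i k (1 - b).
rewrite subKr !opprK; apply=> [j | j | | | |]; rewrite ?lerN2 ?hil ?hir //; lra.
Qed.

Lemma agent_cost_mech (n : nat) (t : 'I_n) (k a l1 l2 : R) (x : 'I_n -> R)
    (i : 'I_n) :
  2 <= k -> 0 < a -> a < 1 ->
  agent_cost (mech t k a x).1 (mech t k a x).2 (x i)
    <= approx_ratio k a * SC_loc l1 l2 x.
Proof.
move=> hk ha0 ha1; rewrite /mech xminE xmaxE /=.
set il := [arg min_(j < t) x j]%O; set ir := [arg max_(j > t) x j]%O.
have hil j : x il <= x j by rewrite /il; case: arg_minP => // ? _; apply.
have hir j : x j <= x ir by rewrite /ir; case: arg_maxP => // ? _; apply.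
case: ltP => side.
  by apply: agent_cost_left_rule => //; lra.
by apply: agent_cost_right_rule => //; lra.
Qed.

Lemma SC_mech_le_SC_loc (n : nat) (t : 'I_n) (k a l1 l2 : R) (x : 'I_n -> R) :
  2 <= k -> 0 < a -> a < 1 ->
  SC_mech t k a x <= approx_ratio k a * (n%:R - 1) * SC_loc l1 l2 x.
Proof.
move=> hk ha0 ha1; rewrite /SC_mech {1}/SC_loc (bigD1 t) //= agent_cost1 add0r.
apply: le_trans
  (ler_sum _ (fun i _ => agent_cost_mech t l1 l2 x i hk ha0 ha1)) _.
rewrite sumr_const cardC1 card_ord mulrAC -[X in X <= _]mulr_natr.
by rewrite -subn1 natrB // (leq_trans _ (ltn_ord t)).
Qed.

End DictatorMechanism.

Theorem theorem4 (R : realType) (n : nat) (t : 'I_n) (k a : R)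
  (hn : (2 <= n)%N) (hk : 2 <= k) (ha0 : 0 < a) (ha1 : a < 1)
  (x : 'I_n -> R) :
  SC_mech t k a x <=
  Num.max ((1 - a) * k / (2 * a)) (a * k / (2 * (1 - a))) * (n%:R - 1) * OPT x.
Proof.
have C_gt0 : 0 < approx_ratio k a * (n%:R - 1).
  have := approx_ratio_ge1 hk ha0 ha1.
  have : 2%:R <= n%:R :> R by rewrite ler_nat.
  by move=> *; apply: mulr_gt0; lra.
rewrite -/(approx_ratio k a) -ler_pdivrMl //.
apply: lb_le_inf; first by exists (SC_loc 0 0 x), (0, 0).
move=> _ [[l1 l2] _ <-]; rewrite ler_pdivrMl //=.
exact: SC_mech_le_SC_loc.
Qed.
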